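(* Let $b>0$ and $\varepsilon\in\mathbb R$ with $b+\varepsilon>0$ and $\varepsilon\neq0$. Then the matrix $P(b,\varepsilon,0)$ has two eigenvalues $\lambda_1,\lambda_2$ with $0<\lambda_1<1$ and $\lambda_2=\lambda_1^{-1}>1$, with corresponding eigenvectors $v_1=(1,f_1)^T$ and $v_2=(1,f_1^{-1})^T$, where $$f_1=\frac{-\alpha+\gamma-\sqrt{(\alpha-\gamma)^2-4\beta^2}}{2\beta}$$ satisfies $f_1<-1$ if $\varepsilon<0$ and $f_1\in(-1,0)$ if $\varepsilon>0$.
   Context: For $k\in\mathbb R$ let $A_1=\begin{pmatrix}-b&0\\-b&-(b+\varepsilon)e^{-ik}\end{pmatrix}$, $A_2=\begin{pmatrix}-b&-(b+\varepsilon)e^{ik}\\0&-b\end{pmatrix}$, $A_3=\begin{pmatrix}-(b+\varepsilon)e^{-ik}&0\\-b&-b\end{pmatrix}$, $A_4=\begin{pmatrix}-b&-b\\0&-(b+\varepsilon)\end{pmatrix}$, $A_5=\begin{pmatrix}-b&0\\-(b+\varepsilon)e^{ik}&-b\end{pmatrix}$, $A_6=\begin{pmatrix}-(b+\varepsilon)&-b\\0&-b\end{pmatrix}$, and $P(b,\varepsilon,k)=-A_6^{-1}A_5A_4^{-1}A_3A_2^{-1}A_1$. With $t=(b+\varepsilon)/b$, define $\alpha=-t^2+2t-\frac4t+\frac4{t^2}$, $\beta=-t^3+t^2+t-3+\frac2t$, $\gamma=t^4-t^2+2t-1$ (these are the entries of $P(b,\varepsilon,0)=\begin{pmatrix}\alpha&\beta\\-\beta&\gamma\end{pmatrix}$).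 *)

From mathcomp Require Import all_boot all_order all_algebra.
Set Implicit Arguments. Unset Strict Implicit. Unset Printing Implicit Defensive.
Import Order.TTheory GRing.Theory Num.Theory.
Local Open Scope ring_scope.

Definition mx2 {R : ringType} (a b c d : R) : 'M[R]_2 :=
  \matrix_(i < 2, j < 2)
    if i == 0 :> nat then (if j == 0 :> nat then a else b)
    else (if j == 0 :> nat then c else d).

Definition cv2 {R : ringType} (x y : R) : 'cV[R]_2 :=
  \col_(i < 2) if i == 0 :> nat then x else y.

Section Pmat.
Variable R : fieldType.
Variables b eps : R.
(* The matrices A_1..A_6 at k = 0 (so e^{+-ik} = 1; all entries are real). *)
Definition A1 := mx2 (- b) 0 (- b) (- (b + eps)).
Definition A2 := mx2 (- b) (- (b + eps)) 0 (- b).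
Definition A3 := mx2 (- (b + eps)) 0 (- b) (- b).
Definition A4 := mx2 (- b) (- b) 0 (- (b + eps)).
Definition A5 := mx2 (- b) 0 (- (b + eps)) (- b).
Definition A6 := mx2 (- (b + eps)) (- b) 0 (- b).
Definition P0 : 'M[R]_2 :=
  - (invmx A6 *m A5 *m invmx A4 *m A3 *m invmx A2 *m A1).

Definition tpar := (b + eps) / b.
Definition alpha := let t := tpar in - t ^+ 2 + 2 * t - 4 / t + 4 / t ^+ 2.
Definition beta := let t := tpar in - t ^+ 3 + t ^+ 2 + t - 3 + 2 / t.
Definition gamma := let t := tpar in t ^+ 4 - t ^+ 2 + 2 * t - 1.
End Pmat.

Definition f1 (R : rcfType) (b eps : R) : R :=
  (- alpha b eps + gamma b eps
   - Num.sqrt ((alpha b eps - gamma b eps) ^+ 2 - 4 * beta b eps ^+ 2))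
  / (2 * beta b eps).

From mathcomp Require Import all_boot all_order all_algebra.
From mathcomp Require Import ring lra.
Set Implicit Arguments. Unset Strict Implicit. Unset Printing Implicit Defensive.
Import Order.TTheory GRing.Theory Num.Theory.
Local Open Scope ring_scope.

(* P(b, eps, 0) = [[alpha, beta], [-beta, gamma]] has determinant
   alpha gamma + beta^2 = 1, and for eps <> 0 its trace alpha + gamma exceeds 2,
   so it is hyperbolic: its eigenvalues (alpha + gamma -+ r) / 2, where
   r^2 = (alpha + gamma)^2 - 4, are mutually inverse and the smaller lies in
   (0, 1).  The vector (1, f) is an eigenvector iff f is a root of the
   palindromic quadratic beta f^2 + (alpha - gamma) f + beta, whose two roots
   are f1 and f1^-1.  With t = (b + eps) / b, the quantities beta t and
   (gamma - alpha) t^2 are t - 1 times a polynomial that is negative,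
   resp. positive, for t > 0; so f1 + f1^-1 = (gamma - alpha) / beta < 0 and
   the sign of f1^-1 - f1 = r / beta, i.e. the sign of -eps, decides whether
   f1 < -1 or -1 < f1 < 0. *)

Section Matrix2.
Variable R : nzRingType.
Implicit Types a b c d x y k : R.

Lemma mulmx_mx2 a b c d a' b' c' d' :
  mx2 a b c d *m mx2 a' b' c' d' =
  mx2 (a * a' + b * c') (a * b' + b * d') (c * a' + d * c') (c * b' + d * d').
Proof.
apply/matrixP=> i j; rewrite !mxE !big_ord_recr big_ord0 /= !mxE add0r.
by case: i => -[|[|i]] Hi //; case: j => -[|[|j]] Hj.
Qed.

Lemma opp_mx2 a b c d : - mx2 a b c d = mx2 (- a) (- b) (- c) (- d).
Proof.
apply/matrixP=> i j; rewrite !mxE.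
by case: i => -[|[|i]] Hi //; case: j => -[|[|j]] Hj.
Qed.

Lemma mx2_id : 1%:M = mx2 1 0 0 1 :> 'M[R]_2.
Proof.
apply/matrixP=> i j; rewrite !mxE.
by case: i => -[|[|i]] Hi //; case: j => -[|[|j]] Hj.
Qed.

Lemma mulmx_mx2_cv2 a b c d x y :
  mx2 a b c d *m cv2 x y = cv2 (a * x + b * y) (c * x + d * y).
Proof.
apply/matrixP=> i j; rewrite !mxE !big_ord_recr big_ord0 /= !mxE add0r.
by case: i => -[|[|i]] Hi.
Qed.

Lemma scale_cv2 k x y : k *: cv2 x y = cv2 (k * x) (k * y).
Proof. by apply/matrixP=> i j; rewrite !mxE; case: i => -[|[|i]] Hi. Qed.

End Matrix2.

Lemma invmx_mx2 (F : fieldType) (a b c d : F) : a * d - b * c != 0 ->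
  invmx (mx2 a b c d) =
  mx2 (d / (a * d - b * c)) (- b / (a * d - b * c))
      (- c / (a * d - b * c)) (a / (a * d - b * c)).
Proof.
move=> det_neq0; set B := mx2 (d / _) _ _ _.
have mulmxB : mx2 a b c d *m B = 1%:M.
  by rewrite mulmx_mx2 mx2_id; congr mx2; field.
have [B_unit _] := mulmx1_unit mulmxB.
by rewrite -[RHS]mul1mx -(mulVmx B_unit) -mulmxA mulmxB mulmx1.
Qed.

Lemma P0_mx2 (F : fieldType) (b eps : F) : b != 0 -> b + eps != 0 ->
  P0 b eps = mx2 (alpha b eps) (beta b eps) (- beta b eps) (gamma b eps).
Proof.
move=> b_neq0 bE_neq0.
rewrite /P0 /A2 /A4 /A6 !invmx_mx2 ?(mulr0, subr0, mulrNN, mulf_neq0) //.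
rewrite /A1 /A3 /A5 !mulmx_mx2 opp_mx2 /alpha /beta /gamma /tpar.
by congr mx2; field; rewrite b_neq0 bE_neq0.
Qed.

Section Coefficients.
Variables (F : fieldType) (b eps : F).
Hypothesis t_neq0 : tpar b eps != 0.
Local Notation t := (tpar b eps).

Lemma alpha_gamma_beta_det : alpha b eps * gamma b eps + beta b eps ^+ 2 = 1.
Proof. by rewrite /alpha /beta /gamma; field. Qed.

Lemma beta_tpar : beta b eps * t = (1 - t) * (t ^+ 3 - t + 2).
Proof. by rewrite /beta; field. Qed.

Lemma gamma_sub_alpha_tpar :
  (gamma b eps - alpha b eps) * t ^+ 2
  = (t - 1) * (t ^+ 2 * (t + 1) * (t ^+ 2 + 1) + 4).
Proof. by rewrite /alpha /gamma; field. Qed.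

Lemma alpha_add_gamma_tpar :
  (alpha b eps + gamma b eps - 2) * t ^+ 2
  = (t - 1) ^+ 2 * (t ^+ 4 + 2 * t ^+ 3 + t ^+ 2 + 4 * t + 4).
Proof. by rewrite /alpha /gamma; field. Qed.

End Coefficients.

Section CoefficientSigns.
Variables (R : realFieldType) (b eps : R).
Hypotheses (b_gt0 : 0 < b) (bE_gt0 : 0 < b + eps).
Local Notation t := (tpar b eps).

Lemma tpar_gt0 : 0 < t.
Proof. by rewrite divr_gt0. Qed.

Lemma tpar_sub1 : t - 1 = eps / b.
Proof. by rewrite /tpar; field; rewrite gt_eqF. Qed.

Lemma tpar_gt1 : (1 < t) = (0 < eps).
Proof. by rewrite -subr_gt0 tpar_sub1 pmulr_lgt0 ?invr_gt0. Qed.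

Lemma tpar_lt1 : (t < 1) = (eps < 0).
Proof. by rewrite -subr_lt0 tpar_sub1 pmulr_llt0 ?invr_gt0. Qed.

Let t_gt0 : 0 < t := tpar_gt0.
Let t_neq0 : t != 0. Proof. exact: lt0r_neq0. Qed.

Let cubic_gt0 : 0 < t ^+ 3 - t + 2.
Proof. by have := sqr_ge0 (t - 1); have := t_gt0; nra. Qed.

Lemma beta_gt0 : (0 < beta b eps) = (eps < 0).
Proof.
by rewrite -(pmulr_lgt0 _ t_gt0) beta_tpar // pmulr_lgt0 // subr_gt0 tpar_lt1.
Qed.

Lemma beta_lt0 : (beta b eps < 0) = (0 < eps).
Proof.
by rewrite -(pmulr_llt0 _ t_gt0) beta_tpar // pmulr_llt0 // subr_lt0 tpar_gt1.
Qed.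

Lemma beta_neq0 : eps != 0 -> beta b eps != 0.
Proof.
move=> eps_neq0; have [eps_lt0|eps_gt0|eps0] := ltgtP eps 0.
- by rewrite gt_eqF // beta_gt0.
- by rewrite lt_eqF // beta_lt0.
- by rewrite eps0 eqxx in eps_neq0.
Qed.

Let quintic_gt0 : 0 < t ^+ 2 * (t + 1) * (t ^+ 2 + 1) + 4.
Proof.
have := exprn_gt0 5 t_gt0; have := exprn_gt0 4 t_gt0.
have := exprn_gt0 3 t_gt0; have := exprn_gt0 2 t_gt0; have := t_gt0; lra.
Qed.

Lemma gamma_sub_alpha_gt0 : (0 < gamma b eps - alpha b eps) = (0 < eps).
Proof.
have t2_gt0 : 0 < t ^+ 2 by rewrite exprn_gt0.
by rewrite -(pmulr_lgt0 _ t2_gt0) gamma_sub_alpha_tpar // pmulr_lgt0 // subr_gt0 tpar_gt1.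
Qed.

Lemma gamma_sub_alpha_lt0 : (gamma b eps - alpha b eps < 0) = (eps < 0).
Proof.
have t2_gt0 : 0 < t ^+ 2 by rewrite exprn_gt0.
by rewrite -(pmulr_llt0 _ t2_gt0) gamma_sub_alpha_tpar // pmulr_llt0 // subr_lt0 tpar_lt1.
Qed.

Lemma alpha_add_gamma_gt2 : eps != 0 -> 2 < alpha b eps + gamma b eps.
Proof.
move=> eps_neq0.
have quartic_gt0 : 0 < t ^+ 4 + 2 * t ^+ 3 + t ^+ 2 + 4 * t + 4.
  have := exprn_gt0 4 t_gt0; have := exprn_gt0 3 t_gt0.
  by have := exprn_gt0 2 t_gt0; have := t_gt0; lra.
have sq_gt0 : 0 < (t - 1) ^+ 2.
  by rewrite exprn_even_gt0 // tpar_sub1 mulf_neq0 // invr_eq0 gt_eqF.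
rewrite -subr_gt0 -(pmulr_lgt0 _ (exprn_gt0 2 t_gt0)) alpha_add_gamma_tpar //.
exact: mulr_gt0.
Qed.

End CoefficientSigns.

Lemma mx2_palindromic_eigen (R : comNzRingType) (a be g f : R) :
  be * f ^+ 2 + (a - g) * f + be = 0 ->
  mx2 a be (- be) g *m cv2 1 f = (a + be * f) *: cv2 1 f.
Proof.
move=> root_f; rewrite mulmx_mx2_cv2 scale_cv2 !mulr1; congr cv2.
by apply/eqP; rewrite -subr_eq0 -oppr_eq0 -root_f; apply/eqP; ring.
Qed.

Definition eig_slope (F : fieldType) (a be g r : F) := (- a + g + r) / (2 * be).

Section EigSlope.
Variables (F : numFieldType) (a be g r : F).
Hypotheses (be_neq0 : be != 0) (r_sqr : r ^+ 2 = (a - g) ^+ 2 - 4 * be ^+ 2).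
Local Notation f x := (eig_slope a be g x).

Lemma eig_slope_root : be * f r ^+ 2 + (a - g) * f r + be = 0.
Proof.
have -> : be * f r ^+ 2 + (a - g) * f r + be
          = (r ^+ 2 - ((a - g) ^+ 2 - 4 * be ^+ 2)) / (4 * be).
  by rewrite /eig_slope; field.
by rewrite r_sqr subrr mul0r.
Qed.

Lemma eig_slope_eigenvalue : a + be * f r = (a + g + r) / 2.
Proof. by rewrite /eig_slope; field. Qed.

Lemma eig_slope_oppV : (f (- r))^-1 = f r.
Proof.
apply: mulr1_eq; have -> : f (- r) * f r = ((g - a) ^+ 2 - r ^+ 2) / (4 * be ^+ 2).
  by rewrite /eig_slope; field.
by rewrite r_sqr; field.
Qed.

Lemma eig_slope_add_opp : f (- r) + f r = (g - a) / be.
Proof. by rewrite /eig_slope; field. Qed.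

Lemma eig_slope_sub_opp : f r - f (- r) = r / be.
Proof. by rewrite /eig_slope; field. Qed.

End EigSlope.

Section InvSumNeg.
Variables (R : realFieldType) (x : R).
Hypothesis sum_lt0 : x + x^-1 < 0.

Let x_lt0 : x < 0.
Proof.
rewrite ltNge; apply/negP=> x_ge0.
by move: sum_lt0; rewrite ltNge addr_ge0 ?invr_ge0.
Qed.

Let mulrV_x : x * x^-1 = 1.
Proof. by rewrite mulfV // lt_eqF // x_lt0. Qed.

Lemma lt_invr_ltN1 : x < x^-1 -> x < -1.
Proof. by have := x_lt0; have := mulrV_x; nra. Qed.

Lemma gt_invr_gtN1 : x^-1 < x -> -1 < x < 0.
Proof. by rewrite x_lt0 andbT; have := x_lt0; have := mulrV_x; nra. Qed.

End InvSumNeg.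

Section UnimodularHyperbolic.
Variables (R : rcfType) (a be g : R).
Hypotheses (det1 : a * g + be ^+ 2 = 1) (trace_gt2 : 2 < a + g).
Local Notation r := (Num.sqrt ((a - g) ^+ 2 - 4 * be ^+ 2)).
Local Notation f x := (eig_slope a be g x).

Let discrE : (a - g) ^+ 2 - 4 * be ^+ 2 = (a + g) ^+ 2 - 4.
Proof.
have -> : (a - g) ^+ 2 - 4 * be ^+ 2 = (a + g) ^+ 2 - 4 * (a * g + be ^+ 2) by ring.
by rewrite det1 mulr1.
Qed.

Let discr_gt0 : 0 < (a - g) ^+ 2 - 4 * be ^+ 2.
Proof.
have -> : (a - g) ^+ 2 - 4 * be ^+ 2 = (a + g - 2) * (a + g + 2).
  by rewrite discrE; ring.
by apply: mulr_gt0; move: trace_gt2; lra.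
Qed.

Lemma sqr_sqrt_discr : r ^+ 2 = (a - g) ^+ 2 - 4 * be ^+ 2.
Proof. by rewrite sqr_sqrtr // ltW. Qed.

Lemma sqrt_discr_gt0 : 0 < r.
Proof. by rewrite sqrtr_gt0. Qed.

Let r_bounds : a + g - 2 < r < a + g.
Proof.
have r_sqr : r ^+ 2 = (a + g) ^+ 2 - 4 by rewrite sqr_sqrt_discr discrE.
by have := sqrt_discr_gt0; have := trace_gt2; move=> *; apply/andP; split; nra.
Qed.

Lemma small_eigenvalue_bounds : 0 < (a + g - r) / 2 < 1.
Proof. by have /andP[] := r_bounds; move: trace_gt2 => *; apply/andP; split; lra. Qed.

Lemma small_eigenvalueV : ((a + g - r) / 2)^-1 = (a + g + r) / 2.
Proof.
apply: mulr1_eq; have -> : (a + g - r) / 2 * ((a + g + r) / 2)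
                           = ((a + g) ^+ 2 - r ^+ 2) / 4 by field.
by rewrite sqr_sqrt_discr discrE; field.
Qed.

Hypothesis be_neq0 : be != 0.

Lemma eig_slope_ltrN1 : 0 < be -> g - a < 0 -> f (- r) < -1.
Proof.
move=> be_gt0 ga_lt0; apply: lt_invr_ltN1; rewrite eig_slope_oppV ?sqr_sqrt_discr //.
  by rewrite eig_slope_add_opp // pmulr_llt0 ?invr_gt0.
by rewrite -subr_gt0 eig_slope_sub_opp // divr_gt0 ?sqrt_discr_gt0.
Qed.

Lemma eig_slope_gtrN1 : be < 0 -> 0 < g - a -> -1 < f (- r) < 0.
Proof.
move=> be_lt0 ga_gt0; apply: gt_invr_gtN1; rewrite eig_slope_oppV ?sqr_sqrt_discr //.
  by rewrite eig_slope_add_opp // pmulr_rlt0 ?invr_lt0.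
by rewrite -subr_lt0 eig_slope_sub_opp // pmulr_rlt0 ?invr_lt0 ?sqrt_discr_gt0.
Qed.

End UnimodularHyperbolic.

Theorem theorem8 (R : rcfType) (b eps : R) :
  0 < b -> 0 < b + eps -> eps != 0 ->
  exists lambda1 lambda2 : R,
    0 < lambda1 < 1 /\ lambda2 = lambda1^-1 /\ 1 < lambda2 /\
    P0 b eps *m cv2 1 (f1 b eps) = lambda1 *: cv2 1 (f1 b eps) /\
    P0 b eps *m cv2 1 (f1 b eps)^-1 = lambda2 *: cv2 1 (f1 b eps)^-1 /\
    (eps < 0 -> f1 b eps < -1) /\
    (0 < eps -> -1 < f1 b eps < 0).
Proof.
move=> b_gt0 bE_gt0 eps_neq0.
rewrite P0_mx2 ?lt0r_neq0 //.
have det1 := alpha_gamma_beta_det (lt0r_neq0 (tpar_gt0 b_gt0 bE_gt0)).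
have trace_gt2 := alpha_add_gamma_gt2 b_gt0 bE_gt0 eps_neq0.
have be_neq0 := beta_neq0 b_gt0 bE_gt0 eps_neq0.
set a := alpha b eps in det1 trace_gt2 *; set be := beta b eps in det1 be_neq0 *.
set g := gamma b eps in det1 trace_gt2 *.
set r := Num.sqrt ((a - g) ^+ 2 - 4 * be ^+ 2).
have r_sqr : r ^+ 2 = (a - g) ^+ 2 - 4 * be ^+ 2 := sqr_sqrt_discr det1 trace_gt2.
have Nr_sqr : (- r) ^+ 2 = (a - g) ^+ 2 - 4 * be ^+ 2 by rewrite sqrrN.
have -> : f1 b eps = eig_slope a be g (- r) by [].
rewrite eig_slope_oppV //.
have [l1_gt0 l1_lt1] := andP (small_eigenvalue_bounds det1 trace_gt2).
exists ((a + g - r) / 2), ((a + g - r) / 2)^-1.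
do !split => //.
- by rewrite l1_gt0.
- by rewrite invf_gt1.
- by rewrite mx2_palindromic_eigen ?eig_slope_root // eig_slope_eigenvalue.
- rewrite small_eigenvalueV //.
  by rewrite mx2_palindromic_eigen ?eig_slope_root // eig_slope_eigenvalue.
- by move=> eps_lt0; apply: eig_slope_ltrN1; rewrite // ?beta_gt0 ?gamma_sub_alpha_lt0.
- by move=> eps_gt0; apply: eig_slope_gtrN1; rewrite // ?beta_lt0 ?gamma_sub_alpha_gt0.
Qed.
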